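(* Let $p,q$ be odd primes with $q-p=2$, let $K=\mathbb{Q}(\sqrt{D})$ with $D\in\{-11,-19,-43,-67,-163\}$, and assume $p$ and $q$ are both inert in $K$. Let $\varepsilon\in\{1,-1\}$, $E=E_\varepsilon: y^2=x(x+\varepsilon p)(x+\varepsilon q)$, $E'=E'_\varepsilon: y^2=x^3-2\varepsilon(p+q)x^2+4x$. Then: (1) if $d\in K(S,2)$ satisfies one of (a) $p\mid d$, (b) $q\mid d$, (c) $d=-1$, then $d\notin S^{(\varphi)}(E/K)$; (2) (a) $2\in S^{(\varphi)}(E/K)$ iff $p\equiv 3\pmod 4$; (b) $-2\in S^{(\varphi)}(E/K)$ iff $p\equiv 1\pmod 4$; (1$'$) if $d\in K(S,2)$ satisfies $2\mid d$, then $d\notin S^{(\widehat\varphi)}(E'/K)$; (2$'$) $-1,p,q\in S^{(\widehat\varphi)}(E'/K)$.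
   Context: $\varphi:E\to E'$, $(x,y)\mapsto(y^2/x^2,y(pq-x^2)/x^2)$, and its dual $\widehat\varphi:E'\to E$, $(x,y)\mapsto(y^2/(4x^2),y(4-x^2)/(8x^2))$. Here $2$ is inert in $K$. Let $S=\{\infty\}\cup\{$primes of $K$ dividing $2pq\}$ and $K(S,2)=\{d\in K^*/K^{*2}:\ \mathrm{ord}_v(d)$ even for all $v\notin S\}=\langle -1,2,p,q\rangle$. The Selmer groups are identified with $S^{(\varphi)}(E/K)=\{d\in K(S,2): C_d(K_v)\neq\emptyset\ \forall v\in S\}$ and $S^{(\widehat\varphi)}(E'/K)=\{d\in K(S,2): C'_d(K_v)\neq\emptyset\ \forall v\in S\}$, where $C_d: dw^2=d^2-2\varepsilon(p+q)dz^2+4z^4$ and $C'_d: dw^2=d^2+\varepsilon(p+q)dz^2+pqz^4$. ''$\pi\mid d$'' means $\mathrm{ord}_\pi(d)$ is odd. *)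

From HB Require Import structures.
From mathcomp Require Import all_boot all_order all_algebra all_field.
Set Implicit Arguments. Unset Strict Implicit. Unset Printing Implicit Defensive.
Import Order.TTheory GRing.Theory Num.Theory.
Local Open Scope ring_scope.

(* K = Q(sqrt D), D = 1 mod 4, O_K = Z[w], w = (1 + sqrt D)/2, w^2 = w + m,
   m = (D - 1)/4.  An element a + b w of O_K is the pair (a, b). *)
Definition omega_m (D : int) : int := divz (D - 1) 4.

Definition okt := (int * int)%type.
Definition ok_const (c : int) : okt := (c, 0).
Definition ok_add (x y : okt) : okt := (x.1 + y.1, x.2 + y.2).
Definition ok_sub (x y : okt) : okt := (x.1 - y.1, x.2 - y.2).
Definition ok_mul (m : int) (x y : okt) : okt :=
  (x.1 * y.1 + m * x.2 * y.2, x.1 * y.2 + x.2 * y.1 + x.2 * y.2).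
Definition ok_cong (l : int) (n : nat) (x y : okt) : Prop :=
  (l ^+ n %| x.1 - y.1)%Z /\ (l ^+ n %| x.2 - y.2)%Z.

(* A rational prime l is inert in K: the minimal polynomial X^2 - X - m of w
   is irreducible (has no root) modulo l (Dedekind-Kummer). *)
Definition inert (D l : int) : Prop :=
  forall x : int, ~ (l %| x ^+ 2 - x - omega_m D)%Z.

Definition quart_res (m d A B X : int) (Z W : okt) : okt :=
  let Z2 := ok_mul m Z Z in
  ok_sub (ok_mul m (ok_const d) (ok_mul m W W))
    (ok_add (ok_const (d ^+ 2 * X ^+ 4))
       (ok_add (ok_mul m (ok_const (A * d * X ^+ 2)) Z2)
               (ok_mul m (ok_const B) (ok_mul m Z2 Z2)))).

(* The curve  d w^2 = d^2 + A d z^2 + B z^4  has a point over K_v, where v is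
   the (inert) prime above the rational prime l.  O_v = lim O_K / l^n O_K is
   modelled by coherent sequences of truncations; K_v = O_v[1/l], so every
   (z, w) in K_v^2 can be written z = Z / l^k, w = W / l^(2k) with Z, W in O_v,
   and the equation becomes  d W^2 = d^2 X^4 + A d X^2 Z^2 + B Z^4, X = l^k. *)
Definition loc_solv (D l d A B : int) : Prop :=
  exists k : nat, exists Z W : nat -> okt,
    (forall n, ok_cong l n (Z n.+1) (Z n) /\ ok_cong l n (W n.+1) (W n)) /\
    (forall n, ok_cong l n (quart_res (omega_m D) d A B (l ^+ k) (Z n) (W n))
                          (0, 0)).

(* the infinite place: K imaginary quadratic, K_infty = C *)
Definition inf_solv (d A B : int) : Prop :=
  exists z w : algC, d%:~R * w ^+ 2 = (d ^+ 2)%:~R + (A * d)%:~R * z ^+ 2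
                                     + B%:~R * z ^+ 4.

(* S = {infty, (2), (p), (q)} (2, p, q inert) *)
Definition loc_all (D p q d A B : int) : Prop :=
  [/\ inf_solv d A B, loc_solv D 2 d A B, loc_solv D p d A B
    & loc_solv D q d A B].

Definition in_Sphi (D eps p q d : int) : Prop :=
  loc_all D p q d (- (2 * eps * (p + q))) 4.

Definition in_Shat (D eps p q d : int) : Prop :=
  loc_all D p q d (eps * (p + q)) (p * q).

(* the element (-1)^a 2^b p^c q^e of K(S,2) = <-1, 2, p, q> *)
Definition ks2 (p q : int) (a b c e : bool) : int :=
  (-1) ^+ a * 2 ^+ b * p ^+ c * q ^+ e.

(* K_oo = C, so every C_d has a point at infinity; at the inert primes of S the
   completion O_v is approximated by the rings O_K / l^n, O_K = Z[w], and local
   solubility becomes a question about congruences.  If l is odd, l divides d exactly once and not B, the terms d w^2 and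
   B z^4 of d w^2 = d^2 + A d z^2 + B z^4 have valuations of different parities and all
   other terms have larger valuation.  At 2 and for d = -1, 2, -2, a point can be
   rescaled (z -> z / 2, w -> w / 4) until z is integral or a 2-adic unit; then finitely
   many congruences modulo 4 or 8 exclude it, and these are checked by computation.  They come from rational z for which the right hand side is d c^2 u with u a
   square in O_v.  By Hensel's lemma, for odd l every l-adic unit u is a square: D is a
   non-residue mod l, so u or u / D is a square mod l, and D = (2w - 1)^2.  At 2 every
   u = 1 mod 4 is a square, as u or u / D is 1 mod 8 (D = 5 mod 8). *)

From HB Require Import structures.
From mathcomp Require Import all_boot all_order all_algebra all_field all_solvable.
From Stdlib Require Import ZArith.
From mathcomp Require Import ring zify.
From mathcomp.zify Require Import ssrZ.
(* ZArith rebinds the %N and %Z delimiters. *)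
Delimit Scope nat_scope with N.
Delimit Scope int_scope with Z.
Set Implicit Arguments. Unset Strict Implicit. Unset Printing Implicit Defensive.
Import Order.TTheory GRing.Theory Num.Theory.
Local Open Scope ring_scope.

(** * Arithmetic in O_K *)

Definition ok_scale (c : int) (x : okt) : okt := (c * x.1, c * x.2).

Definition ok_dvd (l : int) (j : nat) (x : okt) : bool :=
  (l ^+ j %| x.1)%Z && (l ^+ j %| x.2)%Z.

Definition ok_norm (R : comNzRingType) (m : R) (x : R * R) : R :=
  x.1 ^+ 2 + x.1 * x.2 - m * x.2 ^+ 2.

Section OKArith.
Variable m : int.

Lemma ok_scaleA c c' x : ok_scale c (ok_scale c' x) = ok_scale (c * c') x.
Proof. by rewrite /ok_scale /=; congr pair; ring. Qed.

Lemma ok_scaleM c c' x y :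
  ok_mul m (ok_scale c x) (ok_scale c' y) = ok_scale (c * c') (ok_mul m x y).
Proof. by rewrite /ok_mul /ok_scale /=; congr pair; ring. Qed.

Lemma ok_normM x y : ok_norm m (ok_mul m x y) = ok_norm m x * ok_norm m y.
Proof. by rewrite /ok_norm /ok_mul /=; ring. Qed.

End OKArith.

Section OKDivisibility.
Variable l : int.

Lemma ok_congE n x : ok_cong l n x (0, 0) <-> ok_dvd l n x.
Proof. by rewrite /ok_cong /ok_dvd !subr0; split=> [[-> ->] | /andP]. Qed.

Lemma ok_dvd0 x : ok_dvd l 0 x.
Proof. by rewrite /ok_dvd expr0 !dvd1z. Qed.

Lemma ok_dvd_le i j x : (i <= j)%N -> ok_dvd l j x -> ok_dvd l i x.
Proof.
by move=> /(dvdz_exp2l l) lij /andP[h1 h2]; rewrite /ok_dvd !(dvdz_trans lij).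
Qed.

Lemma ok_dvdP j x : reflect (exists y, x = ok_scale (l ^+ j) y) (ok_dvd l j x).
Proof.
case: x => x1 x2; apply: (iffP andP) => /= [[/dvdzP[a ->] /dvdzP[b ->]] | [[a b] [-> ->]]].
  by exists (a, b); rewrite /ok_scale /=; congr pair; ring.
by split; apply: dvdz_mulr.
Qed.

Lemma ok_dvd_scale j x : ok_dvd l j (ok_scale (l ^+ j) x).
Proof. by apply/ok_dvdP; exists x. Qed.

Lemma ok_dvd_scale2l i j x :
  l != 0 -> ok_dvd l (i + j) (ok_scale (l ^+ i) x) = ok_dvd l j x.
Proof.
by move=> l0; rewrite /ok_dvd /ok_scale /= exprD !dvdz_mul2l ?expf_neq0.
Qed.

Lemma ok_dvdBl j x y : ok_dvd l j x -> ok_dvd l j (ok_sub x y) = ok_dvd l j y.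
Proof.
by case/andP=> h1 h2; rewrite /ok_dvd /ok_sub /= (rpredBl _ h1) (rpredBl _ h2).
Qed.

Lemma ok_dvdBr j x y : ok_dvd l j y -> ok_dvd l j (ok_sub x y) = ok_dvd l j x.
Proof. by case/andP=> h1 h2; rewrite /ok_dvd /ok_sub /= (rpredBr _ h1) (rpredBr _ h2). Qed.

Lemma ok_dvdDr j x y : ok_dvd l j y -> ok_dvd l j (ok_add x y) = ok_dvd l j x.
Proof. by case/andP=> h1 h2; rewrite /ok_dvd /ok_add /= (rpredDr _ h1) (rpredDr _ h2). Qed.

End OKDivisibility.

(** * Inert primes *)

Lemma Euclidz_dvdM (p : nat) (x y : int) : prime p ->
  (p%:Z %| x * y)%Z = (p%:Z %| x)%Z || (p%:Z %| y)%Z.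
Proof. by move=> pp; rewrite !dvdzE abszM Euclid_dvdM. Qed.

Lemma Euclidz_dvdX (p : nat) (x : int) n : prime p ->
  (p%:Z %| x ^+ n.+1)%Z = (p%:Z %| x)%Z.
Proof. by move=> pp; rewrite !dvdzE abszX Euclid_dvdX // andbT. Qed.

Lemma prime_ndvdz1 (p : nat) : prime p -> ~~ (p%:Z %| 1)%Z.
Proof. by move=> pp; rewrite dvdzE /= dvdn1; apply/negP => /eqP p1; rewrite p1 in pp. Qed.

Lemma dvdz_prime_inv (p : nat) (x : int) : prime p -> ~~ (p%:Z %| x)%Z ->
  exists v, (p%:Z %| x * v - 1)%Z.
Proof.
move=> pp npx; have [u [v]] := Bezoutz x p.
have /eqP -> : coprimez x p by rewrite coprimezE coprime_sym prime_coprime -?dvdzE.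
by move=> E; exists u; apply/dvdzP; exists (- v); rewrite -E; ring.
Qed.

Lemma ok_dvd_norm (l m : int) x : ok_dvd l 1 x -> (l %| ok_norm m x)%Z.
Proof.
case/ok_dvdP=> [[a b] ->]; rewrite expr1 /ok_norm /=; apply/dvdzP.
by exists (l * (a ^+ 2 + a * b - m * b ^+ 2)); ring.
Qed.

Section InertPrime.
Variables (D : int) (p : nat).
Hypotheses (pp : prime p) (inD : inert D p).
Local Notation m := (omega_m D).

Lemma inert_dvd_norm x : (p%:Z %| ok_norm m x)%Z -> ok_dvd p 1 x.
Proof.
case: x => a b; rewrite /ok_norm /ok_dvd /= expr1 => H.
have [pb | npb] := boolP (p%:Z %| b)%Z.
  rewrite andbT -(@Euclidz_dvdX p a 1 pp).
  have -> : a ^+ 2 = (a ^+ 2 + a * b - m * b ^+ 2) - b * (a - m * b) by ring.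
  by rewrite rpredB // dvdz_mulr.
(* b is invertible mod p, so -a/b would be a root of X^2 - X - m mod p *)
have [v /dvdzP[s Es]] := dvdz_prime_inv pp npb.
have Ebv : b * v = 1 + s * p by rewrite -Es; ring.
case: (@inD (- (a * v))).
have -> : (- (a * v)) ^+ 2 - - (a * v) - m =
    v ^+ 2 * (a ^+ 2 + a * b - m * b ^+ 2)
    - p%:Z * (a * v * s - m * (2 * s + s * s * p%:Z)).
  have -> : v ^+ 2 * (a ^+ 2 + a * b - m * b ^+ 2) =
    (a * v) ^+ 2 + (a * v) * (b * v) - m * (b * v) ^+ 2 by ring.
  by rewrite Ebv; ring.
by apply: rpredB; [apply: dvdz_mull | apply/dvdz_mulr/dvdzz].
Qed.

Lemma inert_ok_dvdM x y :
  ok_dvd p 1 (ok_mul m x y) -> ok_dvd p 1 x || ok_dvd p 1 y.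
Proof.
move/(ok_dvd_norm m); rewrite ok_normM Euclidz_dvdM //.
by case/orP=> /inert_dvd_norm ->; rewrite ?orbT.
Qed.

Lemma ok_dvd_unit_scale u x :
  ~~ (p%:Z %| u)%Z -> ok_dvd p 1 (ok_scale u x) = ok_dvd p 1 x.
Proof. by move=> nu; rewrite /ok_dvd /= expr1 !Euclidz_dvdM // (negbTE nu). Qed.

Lemma inert_ok_dvd_sq u w j : ~~ (p%:Z %| u)%Z ->
  ok_dvd p (2 * j).+1 (ok_scale u (ok_mul m w w)) -> ok_dvd p j.+1 w.
Proof.
have p0 : p%:Z != 0 by rewrite eqz_nat -lt0n prime_gt0.
move=> nu; elim: j w => [|j IH] w H.
  by move: H; rewrite ok_dvd_unit_scale // => /inert_ok_dvdM; rewrite orbb.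
have /ok_dvdP[w' Ew] : ok_dvd p 1 w.
  have := ok_dvd_le (isT : (1 <= (2 * j.+1).+1)%N) H.
  by rewrite ok_dvd_unit_scale // => /inert_ok_dvdM; rewrite orbb.
move: H; rewrite Ew ok_scaleM ok_scaleA.
rewrite (_ : u * (p%:Z ^+ 1 * p%:Z ^+ 1) = p%:Z ^+ 2 * u); last by ring.
rewrite -ok_scaleA (_ : (2 * j.+1).+1 = 2 + (2 * j).+1)%N; last by lia.
rewrite ok_dvd_scale2l // => /IH.
by rewrite -(ok_dvd_scale2l 1 _ _ p0).
Qed.

(* The valuation of p u w^2 is odd. *)
Lemma inert_ok_dvd_uniformizer u w j : ~~ (p%:Z %| u)%Z ->
  ok_dvd p (2 * j) (ok_scale (p%:Z * u) (ok_mul m w w)) ->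
  ok_dvd p (2 * j).+1 (ok_scale (p%:Z * u) (ok_mul m w w)).
Proof.
have p0 : p%:Z != 0 by rewrite eqz_nat -lt0n prime_gt0.
have -> : p%:Z * u = p%:Z ^+ 1 * u by rewrite expr1.
rewrite -ok_scaleA; case: j => [|j] nu; first by rewrite ok_dvd_scale.
rewrite (_ : 2 * j.+1 = 1 + (2 * j).+1)%N ?ok_dvd_scale2l //; last by lia.
move=> /(inert_ok_dvd_sq nu) /ok_dvdP[w' ->].
rewrite ok_scaleM ok_scaleA ok_scaleA mulrAC -ok_scaleA -!exprD.
by rewrite (_ : (1 + (j.+1 + j.+1))%N = (1 + (2 * j).+1).+1) ?ok_dvd_scale //; lia.
Qed.

Lemma inert_val1_leading u (W c y : okt) j : ~~ (p%:Z %| u)%Z ->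
  ok_dvd p (2 * j).+1 (ok_sub (ok_scale (p%:Z * u) (ok_mul m W W))
                              (ok_scale (p%:Z ^+ (2 * j)) (ok_add c (ok_scale p%:Z y)))) ->
  ok_dvd p 1 c.
Proof.
have p0 : p%:Z != 0 by rewrite eqz_nat -lt0n prime_gt0.
move=> nu H.
have HW : ok_dvd p (2 * j) (ok_scale (p%:Z * u) (ok_mul m W W)).
  by move: (ok_dvd_le (leqnSn _) H); rewrite ok_dvdBr ?ok_dvd_scale.
move: H; rewrite ok_dvdBl ?inert_ok_dvd_uniformizer // -addn1 ok_dvd_scale2l //.
by rewrite ok_dvdDr // -[p%:Z]expr1 ok_dvd_scale.
Qed.

End InertPrime.

Section Val1Expansion.
Variables (m l u A B : int) (k : nat) (z w : okt).
Local Notation Z2 := (ok_mul m z z).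

Lemma quart_res_val1_high :
  quart_res m (l * u) A B (l ^+ k) (ok_scale (l ^+ k.+1) z) w =
  ok_sub (ok_scale (l * u) (ok_mul m w w))
    (ok_scale (l ^+ (2 * (2 * k).+1)) (ok_add (ok_const (u ^+ 2))
       (ok_scale l (ok_add (ok_scale (A * u) Z2) (ok_scale (l * B) (ok_mul m Z2 Z2)))))).
Proof.
rewrite (_ : (2 * (2 * k).+1 = k * 4 + 2)%N); last by lia.
rewrite exprD exprM exprS; set c := l ^+ k; case: z => a b.
by rewrite /quart_res /ok_sub /ok_add /ok_mul /ok_scale /ok_const /=; congr pair; ring.
Qed.

Lemma quart_res_val1_low v : (v <= k)%N ->
  quart_res m (l * u) A B (l ^+ k) (ok_scale (l ^+ v) z) w =
  ok_sub (ok_scale (l * u) (ok_mul m w w))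
    (ok_scale (l ^+ (2 * (2 * v))) (ok_add (ok_scale B (ok_mul m Z2 Z2))
       (ok_scale l (ok_add (ok_const (l * u ^+ 2 * (l ^+ (k - v)) ^+ 4))
                           (ok_scale (A * u * (l ^+ (k - v)) ^+ 2) Z2))))).
Proof.
move=> vk; rewrite -(subnKC vk) exprD addKn.
rewrite (_ : (2 * (2 * v) = v * 4)%N); last by lia.
rewrite exprM; set a := l ^+ v; set c := l ^+ (k - v); case: z => x y.
by rewrite /quart_res /ok_sub /ok_add /ok_mul /ok_scale /ok_const /=; congr pair; ring.
Qed.

End Val1Expansion.

Lemma not_loc_solv_val1 D (p : nat) u A B : prime p -> inert D p ->
  ~~ (p%:Z %| u)%Z -> ~~ (p%:Z %| B)%Z -> ~ loc_solv D p%:Z (p%:Z * u) A B.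
Proof.
move=> pp inD nu nB [k [Z [W [_ /(_ (4 * k + 3)%N) /ok_congE]]]].
set z := Z _; set w := W _; set m := omega_m D.
pose P n := (n <= k.+1)%N && ok_dvd p n z.
have ex0 : exists n, P n by exists 0%N; rewrite /P ok_dvd0.
have ub n : P n -> (n <= k.+1)%N by case/andP.
case: (ex_maxnP ex0 ub) => v /andP[vk /ok_dvdP[z' Ez]] vmax {ex0 ub}.
rewrite Ez.
have [-> | vk'] := eqVneq v k.+1.
  rewrite quart_res_val1_high (_ : (4 * k + 3 = (2 * (2 * k).+1).+1)%N); last by lia.
  move/(inert_val1_leading pp inD nu); rewrite /ok_dvd /= dvdz0 andbT expr1.
  by rewrite Euclidz_dvdX // (negbTE nu).
have {vk'}vk : (v <= k)%N by rewrite -ltnS ltn_neqAle vk' vk.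
have le_v : ((2 * (2 * v)).+1 <= 4 * k + 3)%N by lia.
rewrite quart_res_val1_low // => /(ok_dvd_le le_v) /(inert_val1_leading pp inD nu).
rewrite ok_dvd_unit_scale // => /(inert_ok_dvdM pp inD); rewrite orbb.
move=> /(inert_ok_dvdM pp inD); rewrite orbb => pz'.
have /vmax : P v.+1.
  rewrite /P ltnS vk Ez; case/ok_dvdP: pz' => y ->.
  by rewrite ok_scaleA -exprSr ok_dvd_scale.
by rewrite ltnn.
Qed.

(** * Exhaustive search modulo M *)

Definition wmul (R : comNzRingType) (m : R) (x y : R * R) : R * R :=
  (x.1 * y.1 + m * x.2 * y.2, x.1 * y.2 + x.2 * y.1 + x.2 * y.2).

Definition wsq (R : comNzRingType) (m : R) (x : R * R) : R * R := wmul m x x.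
Definition wquart (R : comNzRingType) (m : R) (x : R * R) : R * R := wsq m (wsq m x).
Arguments wmul : simpl never.
Arguments wsq : simpl never.
Arguments wquart : simpl never.

Lemma wsqE (m : int) W : wsq m W = ok_mul m W W. Proof. by []. Qed.

Definition map_pair (R S : Type) (f : R -> S) (x : R * R) : S * S := (f x.1, f x.2).

(* Polynomial conditions, with integer coefficients, on parameters (m, e) and
   on a point (w, z) of R[w]/(w^2 - w - m), given by the list of polynomials
   that should vanish. *)
Definition param_cond := forall R : comNzRingType, R -> R -> seq R.
Definition point_cond := forall R : comNzRingType, R -> R -> R * R -> R * R -> seq R.

Definition param_cond_morph (G : param_cond) :=
  forall (R S : comNzRingType) (f : {rmorphism R -> S}) m e,
  G S (f m) (f e) = map f (G R m e).

Definition point_cond_morph (F : point_cond) :=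
  forall (R S : comNzRingType) (f : {rmorphism R -> S}) m e w z,
  F S (f m) (f e) (map_pair f w) (map_pair f z) = map f (F R m e w z).

(* The search runs over the binary integers, which vm_compute handles fast. *)
Definition residues (M : nat) : seq Z := map Z.of_nat (iota 0 M).

Definition dvdZb (M : nat) (v : Z) : bool := Z.eqb (Z.modulo v (Z.of_nat M)) Z0.

Definition no_solution_mod (M : nat) (G : param_cond) (F : point_cond) : bool :=
  all (fun m => all (fun e => ~~ all (dvdZb M) (G _ m e) ||
    all (fun w1 => all (fun w2 => all (fun z1 => all (fun z2 =>
      ~~ all (dvdZb M) (F _ m e (w1, w2) (z1, z2)))
    (residues M)) (residues M)) (residues M)) (residues M))
  (residues M)) (residues M).

Lemma dvdz_Zp (M : nat) (x : int) : (1 < M)%N ->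
  (M%:Z %| x)%Z <-> (x%:~R : 'Z_M) = 0.
Proof.
move=> M1.
have dvdn_Zp (n : nat) : (M %| n)%N <-> (n%:R : 'Z_M) = 0.
  split=> [H | H]; first by apply/val_inj; rewrite /= val_Zp_nat //; apply/eqP.
  by apply/eqP; rewrite -(val_Zp_nat M1) H.
case: x => n; first by rewrite dvdzE /=; exact: dvdn_Zp.
rewrite NegzE dvdzE abszN /= mulrNz /=.
change ((M %| n.+1)%N <-> - ((n.+1)%:R : 'Z_M) = 0).
by rewrite dvdn_Zp; split=> [-> | /eqP]; [rewrite oppr0 | rewrite oppr_eq0 => /eqP].
Qed.

Lemma int_of_Z_nat (n : nat) : int_of_Z (Z.of_nat n) = n%:Z.
Proof. by apply: (can_inj Z_of_intK); rewrite int_of_ZK. Qed.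

Section NoSolutionMod.
Variables (M : nat) (M1 : (1 < M)%N).

Let reduce (v : Z) : 'Z_M := (int_of_Z v)%:~R.

Lemma reduce_onto (x : 'Z_M) : exists2 a, a \in residues M & reduce a = x.
Proof.
exists (Z.of_nat (val x)).
  by apply: map_f; rewrite mem_iota /= add0n; case: x => /= n; rewrite Zp_cast.
by rewrite /reduce int_of_Z_nat; exact: natr_Zp.
Qed.

Lemma reduce_eq0 v : reduce v = 0 -> dvdZb M v.
Proof.
move/(dvdz_Zp _ M1) => /dvdzP [q Hq]; apply/Z.eqb_eq.
have -> : v = Z.mul (Z_of_int q) (Z.of_nat M) by rewrite -[v]int_of_ZK Hq rmorphM.
by apply: Z.mod_mul; lia.
Qed.

Lemma all_reduce_eq0 (s : seq Z) :
  all (fun x : 'Z_M => x == 0) (map reduce s) -> all (dvdZb M) s.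
Proof. by elim: s => //= x s IH /andP[/eqP/reduce_eq0 -> /IH]. Qed.

Lemma all_intr_eq0 (s : seq int) :
  all (fun v => (M%:Z %| v)%Z) s -> all (fun x : 'Z_M => x == 0) (map intr s).
Proof. by elim: s => //= x s IH /andP[/(dvdz_Zp _ M1) -> /IH ->]. Qed.

(* Both int -> Z and int -> 'Z_M are ring morphisms, and 'Z_M is covered by
   the residues, so a solution over int reduces to one found by the search. *)
Lemma no_solution_modP G F : param_cond_morph G -> point_cond_morph F ->
  no_solution_mod M G F -> forall (m e : int) (w z : int * int),
  all (fun v => (M%:Z %| v)%Z) (G _ m e) ->
  ~ all (fun v => (M%:Z %| v)%Z) (F _ m e w z).
Proof.
move=> GM FM chk m e [w1 w2] [z1 z2] Hg Hf.
have Greduce a b : G _ (reduce a) (reduce b) = map reduce (G _ a b).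
  by rewrite /reduce (GM _ _ intr) (GM _ _ int_of_Z) -map_comp.
have Freduce a b w z : F _ (reduce a) (reduce b) (map_pair reduce w) (map_pair reduce z)
    = map reduce (F _ a b w z).
  rewrite /reduce (_ : map_pair _ w = map_pair intr (map_pair int_of_Z w)) //.
  rewrite (_ : map_pair _ z = map_pair intr (map_pair int_of_Z z)) //.
  by rewrite (FM _ _ intr) (FM _ _ int_of_Z) -map_comp.
have [am Am Em] := reduce_onto m%:~R; have [ae Ae Ee] := reduce_onto e%:~R.
have [a1 A1 E1] := reduce_onto w1%:~R; have [a2 A2 E2] := reduce_onto w2%:~R.
have [a3 A3 E3] := reduce_onto z1%:~R; have [a4 A4 E4] := reduce_onto z2%:~R.
move/allP/(_ am Am)/allP/(_ ae Ae): chk.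
rewrite all_reduce_eq0 /=; last by rewrite -Greduce Em Ee (GM _ _ intr) all_intr_eq0.
move=> /allP/(_ a1 A1)/allP/(_ a2 A2)/allP/(_ a3 A3)/allP/(_ a4 A4).
rewrite all_reduce_eq0 // -Freduce /map_pair /= Em Ee E1 E2 E3 E4.
rewrite (_ : (w1%:~R, w2%:~R) = map_pair intr (w1, w2)) //.
by rewrite (_ : (z1%:~R, z2%:~R) = map_pair intr (z1, z2)) // (FM _ _ intr) all_intr_eq0.
Qed.

End NoSolutionMod.

Definition m_odd : param_cond := fun R m e => [:: 2 * m - 2].
Definition m_odd_e (c : nat) : param_cond := fun R m e => [:: 4 * m - 4; 2 * e - c%:R].

Definition sq_eqN1 : point_cond := fun R m e w z =>
  [:: (wsq m w).1 + 1; (wsq m w).2].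

Definition sq_eq_quart (s : int) : point_cond := fun R m e w z =>
  [:: 2 * (ok_norm m z - 1); (wsq m w).1 + s%:~R * (wquart m z).1;
      (wsq m w).2 + s%:~R * (wquart m z).2].

Definition twice_sq_eq (s : int) : point_cond := fun R m e w z =>
  [:: 2 * (wsq m w).1 + s%:~R * (1 + s%:~R * 2 * e * (wsq m z).1 + (wquart m z).1);
      2 * (wsq m w).2 + s%:~R * (s%:~R * 2 * e * (wsq m z).2 + (wquart m z).2)].

Lemma m_odd_morph : param_cond_morph m_odd.
Proof. by move=> R S f m e; rewrite /m_odd /= rmorphB rmorphM ?rmorph_nat. Qed.

Lemma m_odd_e_morph c : param_cond_morph (m_odd_e c).
Proof. by move=> R S f m e; rewrite /m_odd_e /= !rmorphB !rmorphM ?rmorph_nat. Qed.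

Ltac point_cond_morph_tac :=
  move=> R S f m e w z;
  rewrite /sq_eqN1 /sq_eq_quart /twice_sq_eq /wquart /wsq /wmul /ok_norm /map_pair /= ?rmorph_nat;
  do 3 rewrite ?rmorphD ?rmorphN ?rmorphM;
  rewrite ?rmorph_int ?rmorph1 ?rmorph_nat;
  by do ![done | congr (_ :: _) | ring].

Lemma sq_eqN1_morph : point_cond_morph sq_eqN1.
Proof. point_cond_morph_tac. Qed.

Lemma sq_eq_quart_morph s : point_cond_morph (sq_eq_quart s).
Proof. point_cond_morph_tac. Qed.

Lemma twice_sq_eq_morph s : point_cond_morph (twice_sq_eq s).
Proof. point_cond_morph_tac. Qed.

Lemma no_sq_eqN1_mod4 : no_solution_mod 4 m_odd sq_eqN1.
Proof. by vm_compute. Qed.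

Lemma no_sq_eq_quart_mod4 s : s \in [:: 1; 2; -2] -> no_solution_mod 4 m_odd (sq_eq_quart s).
Proof. by rewrite !inE => /or3P[] /eqP ->; vm_compute. Qed.

Lemma no_twice_sq_eqN1_mod8 : no_solution_mod 8 (m_odd_e 4) (twice_sq_eq (-1)).
Proof. by vm_compute. Qed.

Lemma no_twice_sq_eq1_mod8 : no_solution_mod 8 (m_odd_e 0) (twice_sq_eq 1).
Proof. by vm_compute. Qed.

(** * No local points at 2 *)

Lemma omega_mE D : (4 %| D - 1)%Z -> 4 * omega_m D = D - 1.
Proof. by move=> h; rewrite /omega_m mulrC divzK. Qed.

Lemma omega_m_odd D : (8 %| D - 5)%Z -> (2 %| omega_m D - 1)%Z.
Proof.
move=> h8; have /omega_mE : (4 %| D - 1)%Z by move: h8; clear; lia.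
by move: h8; set m := omega_m D; clear; lia.
Qed.

Lemma inert_two D : (8 %| D - 5)%Z -> inert D 2.
Proof.
move=> /omega_m_odd hm x; rewrite (_ : x ^+ 2 - x = x * (x - 1)); last by ring.
have : (2 %| x * (x - 1))%Z.
  have [h | h] : (2 %| x)%Z \/ (2 %| x - 1)%Z by lia.
    by rewrite dvdz_mulr.
  by rewrite dvdz_mull.
by move: hm; set y := x * (x - 1); set m := omega_m D; clear; lia.
Qed.

Lemma quart_res_scale2 m d A B X Z W :
  quart_res m d A B (2 * X) (ok_scale 2 Z) (ok_scale 4 W) =
  ok_scale (2 ^+ 4) (quart_res m d A B X Z W).
Proof.
case: Z => z1 z2; case: W => w1 w2.
by rewrite /quart_res /ok_sub /ok_add /ok_mul /ok_const /ok_scale /=; congr pair; ring.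
Qed.

Lemma quart_res_split2 m d A B X Z W :
  quart_res m d A B (2 * X) (ok_scale 2 Z) W =
  ok_add (ok_scale d (ok_mul m W W)) (ok_scale (2 ^+ 4) (quart_res m d A B X Z (0, 0))).
Proof.
case: Z => z1 z2; case: W => w1 w2.
by rewrite /quart_res /ok_sub /ok_add /ok_mul /ok_const /ok_scale /=; congr pair; ring.
Qed.

Lemma ok_dvd_quart_resE l j m d A B X Z W : ok_dvd l j (quart_res m d A B X Z W) =
  (l ^+ j %| d * (wsq m W).1
             - (d ^+ 2 * X ^+ 4 + A * d * X ^+ 2 * (wsq m Z).1 + B * (wquart m Z).1))%Z &&
  (l ^+ j %| d * (wsq m W).2 - (A * d * X ^+ 2 * (wsq m Z).2 + B * (wquart m Z).2))%Z.
Proof.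
rewrite /ok_dvd /quart_res /ok_sub /ok_add /ok_mul /ok_const /wquart /wsq /wmul /=.
by congr (andb (_ %| _)%Z (_ %| _)%Z); ring.
Qed.

Lemma dvdz_lin (K x y s t : int) : (K %| x)%Z -> y = s * x + K * t -> (K %| y)%Z.
Proof. by move=> H ->; apply: rpredD; [apply: dvdz_mull | apply/dvdz_mulr/dvdzz]. Qed.

Lemma dvdz_lin_cancel (K c x y s t : int) : c != 0 ->
  (c * K %| x)%Z -> c * y = s * x + c * K * t -> (K %| y)%Z.
Proof. by move=> c0 H E; rewrite -(dvdz_mul2l c0); exact: (dvdz_lin (s := s) (t := t) H). Qed.

Ltac lin_comb s t H :=
  apply: (dvdz_lin (s := s) (t := t) H);
  unfold wquart, wsq, wmul, ok_scale; simpl; ring.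

Ltac lin_comb_cancel c s t H :=
  apply: (dvdz_lin_cancel (c := c) (s := s) (t := t) _ H) => //;
  unfold wquart, wsq, wmul, ok_scale; simpl; ring.

Section TwoAdic.
Variable D : int.
Hypothesis hD : (8 %| D - 5)%Z.
Local Notation m := (omega_m D).

Let two_prime : prime 2. Proof. by []. Qed.
Let in2 : inert D 2. Proof. exact: inert_two. Qed.

Lemma two_dvd_sq d W : d \in [:: -1; 2; -2] ->
  ok_dvd 2 4 (ok_scale d (ok_mul m W W)) -> ok_dvd 2 2 W.
Proof.
have two_scale s : ok_scale (2 * s) (ok_mul m W W) = ok_scale (2 ^+ 1) (ok_scale s (ok_mul m W W)).
  by rewrite ok_scaleA expr1.
rewrite !inE => /or3P[] /eqP -> H.
- by apply: (inert_ok_dvd_sq two_prime in2 (u := -1) (j := 1)) => //; apply: ok_dvd_le H.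
- move: H; rewrite -[2]mulr1 two_scale (_ : 4 = 1 + (2 * 1).+1)%N // ok_dvd_scale2l //.
  exact: (inert_ok_dvd_sq two_prime in2).
- move: H; rewrite -(mulrN1 2) two_scale (_ : 4 = 1 + (2 * 1).+1)%N // ok_dvd_scale2l //.
  exact: (inert_ok_dvd_sq two_prime in2).
Qed.

Lemma quart_res_descent2 d A B c k Z W : d \in [:: -1; 2; -2] ->
  ok_dvd 2 (4 * k + c) (quart_res m d A B (2 ^+ k) Z W) ->
  exists Z' W', ok_dvd 2 c (quart_res m d A B 1 Z' W') \/
    exists Y, ~~ ok_dvd 2 1 Z' /\ ok_dvd 2 c (quart_res m d A B (2 * Y) Z' W').
Proof.
move=> hd; elim: k Z W => [|k IH] Z W H; first by exists Z, W; left; rewrite expr0 in H.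
have [/ok_dvdP[Z' EZ] | nZ] := boolP (ok_dvd 2 1 Z); last first.
  exists Z, W; right; exists (2 ^+ k); split => //.
  by rewrite -exprS; apply: ok_dvd_le H; lia.
move: H; rewrite EZ exprS expr1 => H.
have /(two_dvd_sq hd) /ok_dvdP[W' EW] : ok_dvd 2 4 (ok_scale d (ok_mul m W W)).
  have le4 : (4 <= 4 * k.+1 + c)%N by lia.
  by move: (ok_dvd_le le4 H); rewrite quart_res_split2 ok_dvdDr // ok_dvd_scale.
move: H; rewrite EW (_ : 2 ^+ 2 = 4) // quart_res_scale2.
by rewrite (_ : 4 * k.+1 + c = 4 + (4 * k + c))%N ?ok_dvd_scale2l //; [apply: IH | lia].
Qed.

Lemma not_loc_solv_two d A B c : d \in [:: -1; 2; -2] ->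
  (forall Z W, ~ ok_dvd 2 c (quart_res m d A B 1 Z W)) ->
  (forall Y Z W, ~~ ok_dvd 2 1 Z -> ~ ok_dvd 2 c (quart_res m d A B (2 * Y) Z W)) ->
  ~ loc_solv D 2 d A B.
Proof.
move=> hd base unit [k [Z [W [_ /(_ (4 * k + c)%N) /ok_congE H]]]].
have [Z' [W' [/base // | [Y [nZ' /(unit _ _ _ nZ') //]]]]] := quart_res_descent2 hd H.
Qed.

Lemma ok_norm_odd Z : ~~ ok_dvd 2 1 Z -> (2 %| ok_norm m Z - 1)%Z.
Proof.
move=> nZ; have : ~~ (2 %| ok_norm m Z)%Z.
  by apply: contra nZ; apply: (inert_dvd_norm two_prime in2).
by set N := ok_norm m Z; clear; lia.
Qed.

Lemma no_solution_mod4 F w z : point_cond_morph F -> no_solution_mod 4 m_odd F ->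
  ~ all (fun v => (4 %| v)%Z) (F _ m 0 w z).
Proof.
move=> FM chk; apply: (no_solution_modP _ m_odd_morph FM chk) => //=.
by rewrite andbT; move: (omega_m_odd hD); clear; lia.
Qed.

Lemma no_solution_mod8 (c : nat) F e w z : point_cond_morph F ->
  no_solution_mod 8 (m_odd_e c) F -> (8 %| 2 * e - c%:R)%Z ->
  ~ all (fun v => (8 %| v)%Z) (F _ m e w z).
Proof.
move=> FM chk he; apply: (no_solution_modP _ (m_odd_e_morph c) FM chk) => //=.
by rewrite he andbT; move: (omega_m_odd hD); clear; lia.
Qed.

Let dvd4_16 : (4 %| 2 ^+ 4)%Z. Proof. by []. Qed.

(* Each case reduces, after halving w if necessary, to one of the congruences above. *)
Lemma no_point_N1_X1 a Z W : ~ ok_dvd 2 4 (quart_res m (-1) (4 * a) 4 1 Z W).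
Proof.
rewrite ok_dvd_quart_resE => /andP[/(dvdz_trans dvd4_16) H1 /(dvdz_trans dvd4_16) H2].
apply: (@no_solution_mod4 _ W Z sq_eqN1_morph no_sq_eqN1_mod4); rewrite /= andbT.
apply/andP; split.
  by lin_comb (-1 : int) (a * (wsq m Z).1 - (wquart m Z).1) H1.
by lin_comb (-1 : int) (a * (wsq m Z).2 - (wquart m Z).2) H2.
Qed.

Lemma ok_sq_half W : ok_dvd 2 1 (wsq m W) -> exists W', wsq m W = ok_scale 4 (wsq m W').
Proof.
rewrite wsqE => /(inert_ok_dvdM two_prime in2); rewrite orbb => /ok_dvdP[W' ->].
by exists W'; rewrite ok_scaleM.
Qed.

Lemma no_point_N1_Xeven a Y Z W : ~~ ok_dvd 2 1 Z ->
  ~ ok_dvd 2 4 (quart_res m (-1) (4 * a) 4 (2 * Y) Z W).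
Proof.
move=> nZ; rewrite ok_dvd_quart_resE => /andP[H1 H2].
have /ok_sq_half[W' EW] : ok_dvd 2 1 (wsq m W).
  rewrite /ok_dvd expr1; apply/andP; split; apply: (@dvdz_trans 4) => //.
    lin_comb (-1 : int) (- (4 * Y ^+ 4 - 4 * a * Y ^+ 2 * (wsq m Z).1 + (wquart m Z).1))
      (dvdz_trans dvd4_16 H1).
  lin_comb (-1 : int) (- (- 4 * a * Y ^+ 2 * (wsq m Z).2 + (wquart m Z).2))
    (dvdz_trans dvd4_16 H2).
rewrite EW (_ : 2 ^+ 4 = 4 * 4) // in H1 H2.
apply: (@no_solution_mod4 _ W' Z (sq_eq_quart_morph 1) (no_sq_eq_quart_mod4 _)) => //=.
rewrite andbT; apply/and3P; split.
- by move: (ok_norm_odd nZ); set N := ok_norm m Z; clear; lia.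
- lin_comb_cancel (4 : int) (-1 : int) (- (Y ^+ 4 - a * Y ^+ 2 * (wsq m Z).1)) H1.
- lin_comb_cancel (4 : int) (-1 : int) (a * Y ^+ 2 * (wsq m Z).2) H2.
Qed.

Let dvd4_32 : (2 * 2 %| 2 ^+ 5)%Z. Proof. by []. Qed.

Lemma no_point_2_X1 a Z W : (4 %| a + 2)%Z -> ~ ok_dvd 2 5 (quart_res m 2 (4 * a) 4 1 Z W).
Proof.
move=> ha; rewrite ok_dvd_quart_resE => /andP[H1 H2].
have /ok_sq_half[W' EW] : ok_dvd 2 1 (wsq m W).
  rewrite /ok_dvd expr1; apply/andP; split.
    lin_comb_cancel (2 : int) (1 : int) (1 + 2 * a * (wsq m Z).1 + (wquart m Z).1)
      (dvdz_trans dvd4_32 H1).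
  lin_comb_cancel (2 : int) (1 : int) (2 * a * (wsq m Z).2 + (wquart m Z).2)
    (dvdz_trans dvd4_32 H2).
rewrite EW (_ : 2 ^+ 5 = 4 * 8) // in H1 H2.
apply: (@no_solution_mod8 4 _ (- a) W' Z (twice_sq_eq_morph (-1)) no_twice_sq_eqN1_mod8).
  by move: ha; clear; lia.
rewrite /= andbT; apply/andP; split.
  lin_comb_cancel (4 : int) (1 : int) (0 : int) H1.
lin_comb_cancel (4 : int) (1 : int) (0 : int) H2.
Qed.

Lemma no_point_2_Xeven a Y Z W : ~~ ok_dvd 2 1 Z ->
  ~ ok_dvd 2 5 (quart_res m 2 (4 * a) 4 (2 * Y) Z W).
Proof.
move=> nZ; rewrite ok_dvd_quart_resE (_ : 2 ^+ 5 = 2 * 16) // => /andP[H1 H2].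
apply: (@no_solution_mod4 _ W Z (sq_eq_quart_morph (-2)) (no_sq_eq_quart_mod4 _)) => //=.
rewrite andbT; apply/and3P; split.
- by move: (ok_norm_odd nZ); set N := ok_norm m Z; clear; lia.
- apply: (@dvdz_trans 16) => //.
  lin_comb_cancel (2 : int) (1 : int) (2 * Y ^+ 4 + a * Y ^+ 2 * (wsq m Z).1) H1.
- apply: (@dvdz_trans 16) => //.
  lin_comb_cancel (2 : int) (1 : int) (a * Y ^+ 2 * (wsq m Z).2) H2.
Qed.

Lemma no_point_N2_X1 a Z W : (4 %| a)%Z -> ~ ok_dvd 2 5 (quart_res m (-2) (4 * a) 4 1 Z W).
Proof.
move=> ha; rewrite ok_dvd_quart_resE => /andP[H1 H2].
have /ok_sq_half[W' EW] : ok_dvd 2 1 (wsq m W).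
  rewrite /ok_dvd expr1; apply/andP; split.
    lin_comb_cancel (2 : int) (-1 : int) (- (1 - 2 * a * (wsq m Z).1 + (wquart m Z).1))
      (dvdz_trans dvd4_32 H1).
  lin_comb_cancel (2 : int) (-1 : int) (- (- 2 * a * (wsq m Z).2 + (wquart m Z).2))
    (dvdz_trans dvd4_32 H2).
rewrite EW (_ : 2 ^+ 5 = 4 * 8) // in H1 H2.
apply: (@no_solution_mod8 0 _ (- a) W' Z (twice_sq_eq_morph 1) no_twice_sq_eq1_mod8).
  by move: ha; clear; lia.
rewrite /= andbT; apply/andP; split.
  lin_comb_cancel (4 : int) (-1 : int) (0 : int) H1.
lin_comb_cancel (4 : int) (-1 : int) (0 : int) H2.
Qed.

Lemma no_point_N2_Xeven a Y Z W : ~~ ok_dvd 2 1 Z ->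
  ~ ok_dvd 2 5 (quart_res m (-2) (4 * a) 4 (2 * Y) Z W).
Proof.
move=> nZ; rewrite ok_dvd_quart_resE (_ : 2 ^+ 5 = 2 * 16) // => /andP[H1 H2].
apply: (@no_solution_mod4 _ W Z (sq_eq_quart_morph 2) (no_sq_eq_quart_mod4 _)) => //=.
rewrite andbT; apply/and3P; split.
- by move: (ok_norm_odd nZ); set N := ok_norm m Z; clear; lia.
- apply: (@dvdz_trans 16) => //.
  lin_comb_cancel (2 : int) (-1 : int) (- (2 * Y ^+ 4 - a * Y ^+ 2 * (wsq m Z).1)) H1.
- apply: (@dvdz_trans 16) => //.
  lin_comb_cancel (2 : int) (-1 : int) (a * Y ^+ 2 * (wsq m Z).2) H2.
Qed.

Lemma not_loc_solv_N1_two a : ~ loc_solv D 2 (-1) (4 * a) 4.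
Proof.
apply: (not_loc_solv_two (c := 4)) => // [Z W | Y Z W]; first exact: no_point_N1_X1.
exact: no_point_N1_Xeven.
Qed.

Lemma not_loc_solv_2_two a : (4 %| a + 2)%Z -> ~ loc_solv D 2 2 (4 * a) 4.
Proof.
move=> ha; apply: (not_loc_solv_two (c := 5)) => // [Z W | Y Z W].
  exact: no_point_2_X1.
exact: no_point_2_Xeven.
Qed.

Lemma not_loc_solv_N2_two a : (4 %| a)%Z -> ~ loc_solv D 2 (-2) (4 * a) 4.
Proof.
move=> ha; apply: (not_loc_solv_two (c := 5)) => // [Z W | Y Z W].
  exact: no_point_N2_X1.
exact: no_point_N2_Xeven.
Qed.

End TwoAdic.

(** * Square roots in the completions *)

Lemma odd_prime_ndvd2 (p : nat) : prime p -> odd p -> ~~ (p%:Z %| 2)%Z.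
Proof.
move=> pp po; apply/negP; rewrite dvdzE /= => /(dvdn_leq (isT : (0 < 2)%N)).
by move: (prime_gt1 pp) po; case: p {pp} => [|[|[|]]].
Qed.

Section ResiduesModP.
Variable p : nat.
Hypotheses (pp : prime p) (po : odd p).

Local Notation F := 'F_p.

Lemma dvdz_Fp (x : int) : (p%:Z %| x)%Z = (x%:~R == 0 :> F).
Proof. exact: (dvdz_pcharf (pchar_Fp pp)). Qed.

Lemma Fp_lift (x : F) : exists r : int, r%:~R = x.
Proof. by exists (val x)%:Z; exact: natr_Zp. Qed.

Lemma Fp_unit_order (x : F) : x != 0 -> x ^+ p.-1 = 1.
Proof.
move=> x0; apply: (mulIf x0); rewrite mul1r -exprSr prednK ?prime_gt0 //.
by have := expf_card x; rewrite card_Fp.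
Qed.

Lemma Fp_prim_root : exists g : F, p.-1.-primitive_root g.
Proof.
set rs := [seq x <- enum F | x != 0].
have /hasP[g _ gprim] : has p.-1.-primitive_root rs; last by exists g.
apply: has_prim_root _ _ (filter_uniq _ (enum_uniq _)) _.
- by rewrite -ltnS prednK ?prime_gt0 ?prime_gt1.
- by apply/allP => x; rewrite mem_filter => /andP[x0 _]; apply/unity_rootP/Fp_unit_order.
have : size rs = #|F|.-1.
  rewrite /rs -(cardC1 (0 : F)) cardE /enum_mem (@eq_filter _ (mem F) predT) // filter_predT.
  by congr size; apply: eq_filter => x; rewrite inE.
by rewrite card_Fp // => ->.
Qed.

(* The non-squares form the coset of odd powers of a generator. *)
Lemma sq_or_nonres_sq (u d : int) : ~~ (p%:Z %| u)%Z ->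
  (forall y : int, ~ (p%:Z %| y ^+ 2 - d)%Z) ->
  exists r : int, (p%:Z %| r ^+ 2 - u)%Z \/ (p%:Z %| d * r ^+ 2 - u)%Z.
Proof.
move=> nu nd; set n := p.-1; have [g gprim] := Fp_prim_root.
have nev : ~~ odd n by move: po; rewrite -[p](prednK (prime_gt0 pp)).
have u0 : (u%:~R : F) != 0 by rewrite -dvdz_Fp.
have d0 : (d%:~R : F) != 0.
  by rewrite -dvdz_Fp; apply/negP => h; apply: (nd 0); rewrite expr0n /= add0r rpredN.
have [i Ei] := prim_rootP gprim (Fp_unit_order u0).
have [j Ej] := prim_rootP gprim (Fp_unit_order d0).
have sq (x : F) k : ~~ odd k -> x ^+ k = (x ^+ k./2) ^+ 2.
  by move=> ek; rewrite -exprM muln2 -{1}(odd_double_half k) (negbTE ek) add0n.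
have [oi | ei] := boolP (odd i); last first.
  have [r Er] := Fp_lift (g ^+ i./2).
  by exists r; left; rewrite dvdz_Fp rmorphB rmorphXn /= Er Ei -(sq _ _ ei) subrr.
have oj : odd j.
  apply/negPn/negP => ej; have [y Ey] := Fp_lift (g ^+ j./2).
  by apply: (nd y); rewrite dvdz_Fp rmorphB rmorphXn /= Ey Ej -(sq _ _ ej) subrr.
have jn : (j <= n)%N by apply: ltnW; case: j {Ej oj}.
have ev : ~~ odd (n - j + i) by rewrite oddD oddB // (negbTE nev) oj oi.
have [r Er] := Fp_lift (g ^+ (n - j + i)./2).
exists r; right; rewrite dvdz_Fp rmorphB rmorphM rmorphXn /= Er Ej Ei -(sq _ _ ev).
by rewrite -exprD addnA subnKC // exprD (prim_expr_order gprim) mul1r subrr.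
Qed.

End ResiduesModP.

(* With h = (p + 1) / 2 the inverse of 2, x = (y + 1) h satisfies
   4 (x^2 - x - m) = y^2 - D mod p. *)
Lemma inert_nonres D (p : nat) : prime p -> odd p -> (4 %| D - 1)%Z -> inert D p ->
  forall y : int, ~ (p%:Z %| y ^+ 2 - D)%Z.
Proof.
move=> pp po /omega_mE E4 inD y Hy.
set h : int := (p.+1./2)%:Z.
have E2h : 2 * h = p%:Z + 1.
  have := odd_double_half p.+1; rewrite /= po /= add0n -muln2 /h.
  by set t := p.+1./2; lia.
set s := y + 1; set x := s * h; apply: (inD x).
have K : 4 * (x ^+ 2 - x - omega_m D) =
    (y ^+ 2 - D) + p%:Z * (2 * s ^+ 2 + p%:Z * s ^+ 2 - 2 * s).
  have -> : 4 * (x ^+ 2 - x - omega_m D) =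
      (s * (2 * h)) ^+ 2 - 2 * (s * (2 * h)) - 4 * omega_m D by rewrite /x; ring.
  by rewrite E2h E4 /s; ring.
have : (p%:Z %| 4 * (x ^+ 2 - x - omega_m D))%Z.
  by rewrite K; apply: rpredD => //; apply/dvdz_mulr/dvdzz.
rewrite Euclidz_dvdM // (_ : 4 = 2 * 2) // Euclidz_dvdM // orbb.
by rewrite (negbTE (odd_prime_ndvd2 pp po)).
Qed.

Section HenselOdd.
Variables (p : nat) (a u : int).
Hypotheses (pp : prime p) (po : odd p) (na : ~~ (p%:Z %| a)%Z) (nu : ~~ (p%:Z %| u)%Z).

(* Newton's step r - (a r^2 - u) / (2 a r) modulo p^(n+2) *)
Definition hensel_step (n : nat) (r : int) : int :=
  let P := p%:Z ^+ n.+1 in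
  r - ((a * r ^+ 2 - u) %/ P)%Z * (egcdz (2 * a * r) p).1 * P.

Fixpoint hensel_seq (r0 : int) (n : nat) : int :=
  if n is n'.+1 then hensel_step n' (hensel_seq r0 n') else r0.

Lemma hensel_stepP n r : (p%:Z ^+ n.+1 %| a * r ^+ 2 - u)%Z ->
  (p%:Z ^+ n.+2 %| a * (hensel_step n r) ^+ 2 - u)%Z /\
  (p%:Z ^+ n.+1 %| hensel_step n r - r)%Z.
Proof.
move=> H; rewrite /hensel_step.
set P := p%:Z ^+ n.+1; set c := ((a * r ^+ 2 - u) %/ P)%Z.
set x := (egcdz (2 * a * r) p).1; set y := (egcdz (2 * a * r) p).2.
have Ec : a * r ^+ 2 - u = c * P by rewrite /c divzK.
have nr : ~~ (p%:Z %| r)%Z.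
  apply: contra nu => hr.
  have h1 : (p%:Z %| a * r ^+ 2 - u)%Z.
    by apply: dvdz_trans H; rewrite -[X in (X %| _)%Z]expr1; exact: dvdz_exp2l.
  have -> : u = a * r ^+ 2 - (a * r ^+ 2 - u) by ring.
  by rewrite rpredB // expr2 mulrA dvdz_mull.
have cop : coprimez (2 * a * r) p.
  rewrite coprimez_sym coprimezE prime_coprime // -dvdzE.
  by rewrite !Euclidz_dvdM // (negbTE na) (negbTE nr) (negbTE (odd_prime_ndvd2 pp po)).
have Exy : x * (2 * a * r) + y * p%:Z = 1.
  by rewrite /x /y; case: egcdzP => ? ? /= ->; rewrite (eqP cop).
split; last by apply/dvdzP; exists (- (c * x)); ring.
have -> : a * (r - c * x * P) ^+ 2 - u = P * p%:Z * (c * y) + P * P * (a * c ^+ 2 * x ^+ 2).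
  have -> : a * (r - c * x * P) ^+ 2 - u =
      (a * r ^+ 2 - u) - c * P * (x * (2 * a * r)) + P * P * (a * c ^+ 2 * x ^+ 2) by ring.
  rewrite Ec (_ : x * (2 * a * r) = 1 - y * p%:Z); last by rewrite -[in RHS]Exy addrK.
  ring.
apply: rpredD; first by rewrite /P -exprSr dvdz_mulr.
by apply: dvdz_mulr; rewrite /P -exprD; apply: dvdz_exp2l; lia.
Qed.

Lemma hensel_odd r0 : (p%:Z %| a * r0 ^+ 2 - u)%Z ->
  exists s : nat -> int, forall n,
    (p%:Z ^+ n.+1 %| a * s n ^+ 2 - u)%Z /\ (p%:Z ^+ n.+1 %| s n.+1 - s n)%Z.
Proof.
move=> H0; exists (hensel_seq r0).
have inv n : (p%:Z ^+ n.+1 %| a * hensel_seq r0 n ^+ 2 - u)%Z.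
  by elim: n => [|n IH]; [rewrite expr1 | exact: (hensel_stepP IH).1].
by move=> n; split; [exact: inv | exact: (hensel_stepP (inv n)).2].
Qed.

End HenselOdd.

Section HenselTwo.
Variables (a u : int).
Hypotheses (ha : (2 %| a - 1)%Z) (hau : (8 %| a - u)%Z).

Definition hensel2_step (n : nat) (r : int) : int :=
  r + ((a * r ^+ 2 - u) %/ 2 ^+ n.+3)%Z * 2 ^+ n.+2.

Fixpoint hensel2_seq (n : nat) : int :=
  if n is n'.+1 then hensel2_step n' (hensel2_seq n') else 1.

Lemma hensel2_stepP n r : (2 %| r - 1)%Z -> (2 ^+ n.+3 %| a * r ^+ 2 - u)%Z ->
  [/\ (2 %| hensel2_step n r - 1)%Z, (2 ^+ n.+4 %| a * (hensel2_step n r) ^+ 2 - u)%Z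
    & (2 ^+ n.+2 %| hensel2_step n r - r)%Z].
Proof.
move=> hr H; rewrite /hensel2_step.
set Q : int := 2 ^+ n.+2; set c := ((a * r ^+ 2 - u) %/ 2 ^+ n.+3)%Z.
have Ec : a * r ^+ 2 - u = c * (2 * Q) by rewrite /Q -exprS /c divzK.
have hQ : (2 %| Q)%Z by rewrite /Q exprS dvdz_mulr.
split.
- have -> : r + c * Q - 1 = (r - 1) + Q * c by ring.
  by apply: rpredD => //; apply: dvdz_mulr.
- have -> : a * (r + c * Q) ^+ 2 - u = (2 * Q) * (c * (1 + a * r)) + Q * Q * (a * c ^+ 2).
    have -> : a * (r + c * Q) ^+ 2 - u =
        (a * r ^+ 2 - u) + (2 * Q) * (c * a * r) + Q * Q * (a * c ^+ 2) by ring.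
    by rewrite Ec; ring.
  apply: rpredD.
    rewrite (_ : 2 ^+ n.+4 = (2 * Q) * 2); last by rewrite /Q !exprS; ring.
    apply: dvdz_mul => //; apply: dvdz_mull.
    by move: (dvdz_mulr (r - 1) ha) ha hr; set t := (a - 1) * (r - 1); clear; lia.
  by apply: dvdz_mulr; rewrite /Q -exprD; apply: dvdz_exp2l; lia.
- by rewrite (_ : r + c * Q - r = Q * c); [apply: dvdz_mulr | ring].
Qed.

Lemma hensel_two : exists s : nat -> int, forall n,
  (2 ^+ n.+3 %| a * s n ^+ 2 - u)%Z /\ (2 ^+ n.+2 %| s n.+1 - s n)%Z.
Proof.
exists hensel2_seq.
have inv n : (2 %| hensel2_seq n - 1)%Z /\ (2 ^+ n.+3 %| a * hensel2_seq n ^+ 2 - u)%Z.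
  elim: n => [|n [IH1 IH2]]; first by split; [rewrite subrr | rewrite expr1n mulr1].
  by have [] := hensel2_stepP IH1 IH2.
by move=> n; have [h1 h2] := inv n; have [] := hensel2_stepP h1 h2.
Qed.

End HenselTwo.

Definition ok_sqrt_seq (m l u : int) (W : nat -> okt) : Prop :=
  (forall n, ok_cong l n (W n.+1) (W n)) /\
  (forall n, ok_cong l n (ok_mul m (W n) (W n)) (u, 0)).

Lemma dvdz_exp_le (l x : int) (i j : nat) : (i <= j)%N -> (l ^+ j %| x)%Z -> (l ^+ i %| x)%Z.
Proof. by move=> ij; apply: dvdz_trans; apply: dvdz_exp2l. Qed.

Section SqrtSeq.
Variables (D l u : int) (s : nat -> int).
Local Notation m := (omega_m D).

Lemma ok_sqrt_seq_int :
  (forall n, (l ^+ n %| s n ^+ 2 - u)%Z /\ (l ^+ n %| s n.+1 - s n)%Z) ->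
  ok_sqrt_seq m l u (fun n => (s n, 0)).
Proof.
move=> H; split=> n; have [h1 h2] := H n; split=> /=.
- by [].
- by rewrite subrr dvdz0.
- by move: h1; rewrite mulr0 addr0 expr2.
- by rewrite !(mulr0, mul0r, addr0, subr0) dvdz0.
Qed.

(* (2 w - 1)^2 = D *)
Lemma ok_sqrt_seq_D : (4 %| D - 1)%Z ->
  (forall n, (l ^+ n %| D * s n ^+ 2 - u)%Z /\ (l ^+ n %| s n.+1 - s n)%Z) ->
  ok_sqrt_seq m l u (fun n => (- s n, 2 * s n)).
Proof.
move=> /omega_mE E4 H; split=> n; have [h1 h2] := H n;
  rewrite /ok_cong /ok_mul /=; split.
- by rewrite (_ : - s n.+1 - - s n = - (s n.+1 - s n)) ?rpredN //; ring.
- by rewrite -mulrBr dvdz_mull.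
- rewrite (_ : _ - u = D * s n ^+ 2 - u) //.
  by rewrite [in RHS](_ : D = 4 * m + 1); [ring | rewrite E4; ring].
- by rewrite (_ : _ - 0 = 0) ?dvdz0 //; ring.
Qed.

End SqrtSeq.

Lemma ok_sqrt_odd D (p : nat) u : prime p -> odd p -> (4 %| D - 1)%Z -> inert D p ->
  ~~ (p%:Z %| u)%Z -> exists W, ok_sqrt_seq (omega_m D) p u W.
Proof.
move=> pp po hD inD nu; have nr := inert_nonres pp po hD inD.
have [r [Hr | Hr]] := sq_or_nonres_sq pp po nu nr.
- have Hr1 : (p%:Z %| 1 * r ^+ 2 - u)%Z by rewrite mul1r.
  have [s Hs] := hensel_odd pp po (prime_ndvdz1 pp) nu Hr1.
  exists (fun n => (s n, 0)); apply: ok_sqrt_seq_int => n; have [h1 h2] := Hs n.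
  by rewrite mul1r in h1; split; [apply: dvdz_exp_le h1 | apply: dvdz_exp_le h2].
- have nD : ~~ (p%:Z %| D)%Z.
    by apply/negP => h; apply: (nr 0); rewrite expr0n /= add0r rpredN.
  have [s Hs] := hensel_odd pp po nD nu Hr.
  exists (fun n => (- s n, 2 * s n)); apply: ok_sqrt_seq_D => // n; have [h1 h2] := Hs n.
  by split; [apply: dvdz_exp_le h1 | apply: dvdz_exp_le h2].
Qed.

(* u = 1 mod 8 is a square in Z_2; otherwise u = 5 = D mod 8 and u / D is one. *)
Lemma ok_sqrt_two D u : (8 %| D - 5)%Z -> (4 %| u - 1)%Z ->
  exists W, ok_sqrt_seq (omega_m D) 2 u W.
Proof.
move=> h8 hu; have hD : (4 %| D - 1)%Z by move: h8; clear; lia.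
have [h | h] := boolP (8 %| u - 1)%Z.
- have h1u : (8 %| 1 - u)%Z by move: h; clear; lia.
  have h11 : (2 %| 1 - 1)%Z by rewrite subrr.
  have [s Hs] := hensel_two h11 h1u.
  exists (fun n => (s n, 0)); apply: ok_sqrt_seq_int => n; have [h1 h2] := Hs n.
  by rewrite mul1r in h1; split; [apply: dvdz_exp_le h1 | apply: dvdz_exp_le h2]; lia.
- have hD2 : (2 %| D - 1)%Z by move: h8; clear; lia.
  have hDu : (8 %| D - u)%Z by move: h8 hu h; clear; lia.
  have [s Hs] := hensel_two hD2 hDu.
  exists (fun n => (- s n, 2 * s n)); apply: ok_sqrt_seq_D => // n; have [h1 h2] := Hs n.
  by split; [apply: dvdz_exp_le h1 | apply: dvdz_exp_le h2]; lia.
Qed.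

Lemma quart_res_int_z m d A B X z c u w :
  quart_res m d A B X (z, 0) (ok_scale c w) =
  ok_add (ok_scale (d * c ^+ 2) (ok_sub (ok_mul m w w) (u, 0)))
    (ok_const (d * c ^+ 2 * u - (d ^+ 2 * X ^+ 4 + A * d * X ^+ 2 * z ^+ 2 + B * z ^+ 4))).
Proof.
case: w => w1 w2.
by rewrite /quart_res /ok_sub /ok_add /ok_mul /ok_const /ok_scale /=; congr pair; ring.
Qed.

(* (z / l^k, c sqrt(u) / l^(2k)) is a point of C_d over K_v. *)
Lemma loc_solv_of_sqrt D (l : int) d A B (k : nat) (z c u : int) W :
  ok_sqrt_seq (omega_m D) l u W ->
  d ^+ 2 * (l ^+ k) ^+ 4 + A * d * (l ^+ k) ^+ 2 * z ^+ 2 + B * z ^+ 4 = d * c ^+ 2 * u ->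
  loc_solv D l d A B.
Proof.
move=> [W_coh W_sq] E.
exists k, (fun _ => (z, 0)), (fun n => ok_scale c (W n)); split => n.
  case: (W_coh n) => h1 h2.
  by rewrite /ok_cong /= !subrr dvdz0 -!mulrBr !dvdz_mull.
rewrite (quart_res_int_z _ _ _ _ _ _ _ u) -E subrr; case: (W_sq n) => h1 h2.
rewrite /ok_cong /ok_add /ok_const /ok_scale /= !addr0.
by split; apply: dvdz_mull; [exact: h1 | move: h2; rewrite subr0].
Qed.

Lemma inf_solv_all d A B : inf_solv d A B.
Proof.
exists 0, (sqrtC d%:~R); rewrite sqrtCK expr0n /= !mulr0 !addr0 expr0n /= mulr0 addr0.
by rewrite rmorphXn /= expr2.
Qed.

Lemma loc_solv_odd D (p : nat) d A B (k : nat) (z u : int) : prime p -> odd p ->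
  (4 %| D - 1)%Z -> inert D p -> ~~ (p%:Z %| u)%Z ->
  d ^+ 2 * (p%:Z ^+ k) ^+ 4 + A * d * (p%:Z ^+ k) ^+ 2 * z ^+ 2 + B * z ^+ 4 = d * u ->
  loc_solv D p%:Z d A B.
Proof.
move=> pp po hD inD nu E; have [W HW] := ok_sqrt_odd pp po hD inD nu.
by apply: (loc_solv_of_sqrt (k := k) (z := z) (c := 1) HW); rewrite expr1n mulr1.
Qed.

Lemma loc_solv_odd_unit D (p : nat) d A B : prime p -> odd p ->
  (4 %| D - 1)%Z -> inert D p -> ~~ (p%:Z %| d)%Z -> loc_solv D p%:Z d A B.
Proof.
move=> pp po hD inD nd; apply: (loc_solv_odd (k := 0) (z := 0) pp po hD inD nd).
by rewrite !expr0n /= expr0; ring.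
Qed.

Lemma loc_solv_two D d A B (k : nat) (z c u : int) : (8 %| D - 5)%Z -> (4 %| u - 1)%Z ->
  d ^+ 2 * (2 ^+ k) ^+ 4 + A * d * (2 ^+ k) ^+ 2 * z ^+ 2 + B * z ^+ 4 = d * c ^+ 2 * u ->
  loc_solv D 2 d A B.
Proof. by move=> hD hu E; have [W HW] := ok_sqrt_two hD hu; exact: loc_solv_of_sqrt HW E. Qed.

(** * The Selmer groups *)

Lemma prime_ndvdzX (p : nat) (x : int) n : prime p -> ~~ (p%:Z %| x)%Z ->
  ~~ (p%:Z %| x ^+ n)%Z.
Proof. by case: n => [|n] pp; rewrite ?expr0 ?prime_ndvdz1 // Euclidz_dvdX. Qed.

Lemma prime_ndvdzN1 (p : nat) : prime p -> ~~ (p%:Z %| -1)%Z.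
Proof. by move=> pp; have := prime_ndvdz1 pp; rewrite !dvdzE. Qed.

Section Proposition25.
Variables (p q : nat) (D eps : int).
Hypotheses (pp : prime p) (qp : prime q) (po : odd p) (qo : odd q) (Eq : q = (p + 2)%N).
Hypotheses (hD : (8 %| D - 5)%Z) (inp : inert D p) (inq : inert D q).
Hypothesis heps : eps = 1 \/ eps = -1.

Let hD4 : (4 %| D - 1)%Z. Proof. by move: hD; clear; lia. Qed.
Let Eqz : q%:Z = p%:Z + 2. Proof. by rewrite Eq PoszD. Qed.
Let np2 : ~~ (p%:Z %| 2)%Z. Proof. exact: odd_prime_ndvd2. Qed.
Let nq2 : ~~ (q%:Z %| 2)%Z. Proof. exact: odd_prime_ndvd2. Qed.
Let n2p : ~~ (2 %| p%:Z)%Z. Proof. by rewrite dvdzE /= dvdn2 po. Qed.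
Let n2q : ~~ (2 %| q%:Z)%Z. Proof. by rewrite dvdzE /= dvdn2 qo. Qed.
Let npq : ~~ (p%:Z %| q%:Z)%Z.
Proof. by rewrite dvdzE /= Eq dvdn_addr ?dvdnn // -(@dvdzE p 2). Qed.
Let nqp : ~~ (q%:Z %| p%:Z)%Z.
Proof. by rewrite dvdzE /=; apply/negP => /(dvdn_leq (prime_gt0 pp)); lia. Qed.
Let p_mod4 : (p %% 4 = 1)%N \/ (p %% 4 = 3)%N.
Proof. by move: (odd_double_half p); rewrite po; set h := p./2; clear; lia. Qed.

Local Notation aphi := (- (eps * (p%:Z + 1))).

Let Sphi_A : - (2 * eps * (p%:Z + q%:Z)) = 4 * aphi.
Proof. by rewrite Eqz; ring. Qed.

Lemma Sphi_notin_p u : ~~ (p%:Z %| u)%Z -> ~ in_Sphi D eps p q (p%:Z * u).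
Proof.
move=> nu [_ _ Hp _]; apply: (not_loc_solv_val1 pp inp nu _ Hp).
by rewrite (_ : 4 = 2 * 2) // Euclidz_dvdM // orbb.
Qed.

Lemma Sphi_notin_q u : ~~ (q%:Z %| u)%Z -> ~ in_Sphi D eps p q (q%:Z * u).
Proof.
move=> nu [_ _ _ Hq]; apply: (not_loc_solv_val1 qp inq nu _ Hq).
by rewrite (_ : 4 = 2 * 2) // Euclidz_dvdM // orbb.
Qed.

Lemma Sphi_notin_N1 : ~ in_Sphi D eps p q (-1).
Proof. by case=> _ H2 _ _; move: H2; rewrite Sphi_A; apply: (not_loc_solv_N1_two hD). Qed.

Lemma Sphi_ks2 (a b c e : bool) : [|| c, e | ks2 p q a b c e == -1] ->
  ~ in_Sphi D eps p q (ks2 p q a b c e).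
Proof.
case: c => [_ | ].
  rewrite (_ : ks2 _ _ _ _ _ _ = p%:Z * ((-1) ^+ a * 2 ^+ b * q%:Z ^+ e)).
    apply: Sphi_notin_p; rewrite !Euclidz_dvdM // !negb_or -andbA.
    by apply/and3P; split; apply: prime_ndvdzX; rewrite ?prime_ndvdzN1.
  by rewrite /ks2 expr1; ring.
case: e => [_ | /= /eqP ->]; last exact: Sphi_notin_N1.
rewrite (_ : ks2 _ _ _ _ _ _ = q%:Z * ((-1) ^+ a * 2 ^+ b)).
  apply: Sphi_notin_q; rewrite !Euclidz_dvdM // !negb_or.
  by apply/andP; split; apply: prime_ndvdzX; rewrite ?prime_ndvdzN1.
by rewrite /ks2 expr1 expr0; ring.
Qed.

Lemma Sphi_2 : in_Sphi D eps p q 2 <-> (p %% 4 = 3)%N.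
Proof.
split.
  case: p_mod4 => // h1 [_ H2 _ _]; exfalso; move: H2; rewrite Sphi_A.
  by apply: (not_loc_solv_2_two hD); case: heps => ->; move: h1; clear; lia.
move=> h3; split; first exact: inf_solv_all.
- apply: (loc_solv_two (k := 0) (z := 1) (c := 2) (u := 1 + aphi) hD).
    by case: heps => ->; move: h3; clear; lia.
  by rewrite Sphi_A; ring.
- exact: loc_solv_odd_unit.
- exact: loc_solv_odd_unit.
Qed.

Lemma Sphi_N2 : in_Sphi D eps p q (-2) <-> (p %% 4 = 1)%N.
Proof.
split.
  case: p_mod4 => // h1 [_ H2 _ _]; exfalso; move: H2; rewrite Sphi_A.
  by apply: (not_loc_solv_N2_two hD); case: heps => ->; move: h1; clear; lia.
move=> h1; split; first exact: inf_solv_all.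
- apply: (loc_solv_two (k := 0) (z := 1) (c := 2) (u := - (1 - aphi)) hD).
    by case: heps => ->; move: h1; clear; lia.
  by rewrite Sphi_A; ring.
- by apply: loc_solv_odd_unit; rewrite ?rpredN.
- by apply: loc_solv_odd_unit; rewrite ?rpredN.
Qed.

Lemma Shat_ks2 (a b c e : bool) : b -> ~ in_Shat D eps p q (ks2 p q a b c e).
Proof.
move=> {b}->; rewrite (_ : ks2 _ _ _ _ _ _ = 2%:Z * ((-1) ^+ a * p%:Z ^+ c * q%:Z ^+ e)).
  case=> _ H2 _ _; apply: (not_loc_solv_val1 (p := 2) _ (inert_two hD) _ _ H2) => //.
    rewrite !Euclidz_dvdM // !negb_or -andbA.
    by apply/and3P; split; apply: prime_ndvdzX; rewrite ?prime_ndvdzN1.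
  by rewrite Euclidz_dvdM //; apply/norP.
by rewrite /ks2 expr1; ring.
Qed.

Let sq_p1 : (4 %| (p%:Z + 1) * (p%:Z + 1))%Z.
Proof.
have h2 : (2 %| p%:Z + 1)%Z by move: n2p; clear; lia.
by rewrite (_ : 4 = 2 * 2) //; apply: dvdz_mul.
Qed.

Lemma Shat_N1 : in_Shat D eps p q (-1).
Proof.
split; first exact: inf_solv_all.
- apply: (loc_solv_two (k := 1) (z := 1) (c := 1)
    (u := - (16 - eps * (p%:Z + q%:Z) * 4 + p%:Z * q%:Z)) hD); last by ring.
  apply: (dvdz_lin (s := -1) (t := eps * (p%:Z + q%:Z) - 4) sq_p1).
  by rewrite Eqz; ring.
- by apply: loc_solv_odd_unit; rewrite ?prime_ndvdzN1.
- by apply: loc_solv_odd_unit; rewrite ?prime_ndvdzN1.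
Qed.

Lemma Shat_p : in_Shat D eps p q p.
Proof.
split; first exact: inf_solv_all.
- case: p_mod4 => h4.
    apply: (loc_solv_two (k := 0) (z := 2) (c := 1)
      (u := p%:Z + 4 * (eps * (p%:Z + q%:Z)) + 16 * q%:Z) hD); last by ring.
    by move: h4; set t := eps * _; clear; lia.
  apply: (loc_solv_two (k := 1) (z := 1) (c := 1)
    (u := 16 * p%:Z + 4 * (eps * (p%:Z + q%:Z)) + q%:Z) hD); last by ring.
  by move: h4 Eqz; set t := eps * _; clear; lia.
- apply: (loc_solv_odd (k := 1) (z := 1)
    (u := p%:Z ^+ 5 + eps * (p%:Z + q%:Z) * p%:Z ^+ 2 + q%:Z)) => //; last by ring.
  rewrite (_ : p%:Z ^+ 5 + _ + _ = q%:Z + p%:Z * (p%:Z ^+ 4 + eps * (p%:Z + q%:Z) * p%:Z)).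
    by rewrite rpredDr // dvdz_mulr.
  by ring.
- exact: loc_solv_odd_unit.
Qed.

Lemma Shat_q : in_Shat D eps p q q.
Proof.
split; first exact: inf_solv_all.
- case: p_mod4 => h4.
    apply: (loc_solv_two (k := 1) (z := 1) (c := 1)
      (u := 16 * q%:Z + 4 * (eps * (p%:Z + q%:Z)) + p%:Z) hD); last by ring.
    by move: h4; set t := eps * _; clear; lia.
  apply: (loc_solv_two (k := 0) (z := 2) (c := 1)
    (u := q%:Z + 4 * (eps * (p%:Z + q%:Z)) + 16 * p%:Z) hD); last by ring.
  by move: h4 Eqz; set t := eps * _; clear; lia.
- exact: loc_solv_odd_unit.
- apply: (loc_solv_odd (k := 1) (z := 1)
    (u := q%:Z ^+ 5 + eps * (p%:Z + q%:Z) * q%:Z ^+ 2 + p%:Z)) => //; last by ring.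
  rewrite (_ : q%:Z ^+ 5 + _ + _ = p%:Z + q%:Z * (q%:Z ^+ 4 + eps * (p%:Z + q%:Z) * q%:Z)).
    by rewrite rpredDr // dvdz_mulr.
  by ring.
Qed.

End Proposition25.

Theorem proposition2p5 (p q : nat) (D eps : int) :
  prime p -> prime q -> odd p -> odd q -> q = (p + 2)%N ->
  D \in [:: -11; -19; -43; -67; -163] ->
  inert D p%:Z -> inert D q%:Z ->
  (eps = 1 \/ eps = -1) ->
  [/\ (forall a b c e : bool,
         [|| c, e | ks2 p q a b c e == -1] ->
         ~ in_Sphi D eps p q (ks2 p q a b c e)),
      (in_Sphi D eps p q 2 <-> (p %% 4 = 3)%N) /\
      (in_Sphi D eps p q (-2) <-> (p %% 4 = 1)%N),
      (forall a b c e : bool, b -> ~ in_Shat D eps p q (ks2 p q a b c e)) &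
      [/\ in_Shat D eps p q (-1), in_Shat D eps p q p & in_Shat D eps p q q]].
Proof.
move=> pp qp po qo Eq hD inp inq heps.
have hD8 : (8 %| D - 5)%Z.
  by move: hD; rewrite !inE => /orP[|/orP[|/orP[|/orP[]]]] /eqP ->.
split.
- exact: Sphi_ks2.
- by split; [exact: Sphi_2 | exact: Sphi_N2].
- exact: Shat_ks2.
- by split; [exact: Shat_N1 | exact: Shat_p | exact: Shat_q].
Qed.
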